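(* The word problem for the Manturov group $G^2_3=\langle a,b,c\mid a^2=b^2=c^2=1,\ bca=acb,\ cab=bac,\ cba=abc\rangle$ is solvable.
   Context: $G^2_3$ is the Manturov $(2,3)$-group, with generators $a=a_{12}$, $b=a_{13}$, $c=a_{23}$; each generator is an involution, so every element is represented by a positive word in $a,b,c$. *)

From Stdlib Require Import List Arith Relations.
Import ListNotations.

Inductive gen : Type := ga | gb | gc.   (* a = a_12, b = a_13, c = a_23 *)

Definition word := list gen.

Definition relators : list (word * word) :=
  [ ([ga; ga], []);
    ([gb; gb], []);
    ([gc; gc], []);
    ([gb; gc; ga], [ga; gc; gb]);
    ([gc; ga; gb], [gb; ga; gc]);
    ([gc; gb; ga], [ga; gb; gc]) ].

Definition step (u v : word) : Prop :=
  exists p q l r, In (l, r) relators /\ u = p ++ l ++ q /\ v = p ++ r ++ q.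

(** Since every generator is
    an involution, the group is the monoid presented by these relations, and
    every element is represented by a positive word. *)
Definition word_eq : word -> word -> Prop := clos_refl_sym_trans word step.

Definition word_trivial (w : word) : Prop := word_eq w [].

Inductive code : Type :=
| Zero : code
| Succ : code
| Proj : nat -> code
| Comp : code -> list code -> code
| Prec : code -> code -> code
| Mu   : code -> code.

Inductive eval : code -> list nat -> nat -> Prop :=
| ev_zero xs : eval Zero xs 0
| ev_succ x : eval Succ [x] (S x)
| ev_proj i xs : i < length xs -> eval (Proj i) xs (nth i xs 0)
| ev_comp f gs xs ys y :
    evals gs xs ys -> eval f ys y -> eval (Comp f gs) xs y
| ev_prec0 f g xs y : eval f xs y -> eval (Prec f g) (0 :: xs) y
| ev_precS f g n xs z y :
    eval (Prec f g) (n :: xs) z -> eval g (n :: z :: xs) y ->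
    eval (Prec f g) (S n :: xs) y
| ev_mu f xs n :
    eval f (n :: xs) 0 ->
    (forall m, m < n -> exists k, eval f (m :: xs) (S k)) ->
    eval (Mu f) xs n
with evals : list code -> list nat -> list nat -> Prop :=
| evs_nil xs : evals [] xs []
| evs_cons g gs xs y ys :
    eval g xs y -> evals gs xs ys -> evals (g :: gs) xs (y :: ys).

(** Injective Goedel encoding of words as natural numbers (bijective base 3). *)
Definition gen_code (x : gen) : nat :=
  match x with ga => 1 | gb => 2 | gc => 3 end.

Fixpoint enc (w : word) : nat :=
  match w with
  | [] => 0
  | x :: w' => gen_code x + 3 * enc w'
  end.

(* The alternating content alt_d(w) = sum_i (-1)^i [w_i = d] of a word is invariant
   under the defining relations: [x x] has content zero and contributes nothing to
   the parity of positions, and each three-letter relation reverses a word of odd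
   length.  Conversely a conjugates (ab)^m and (bc)^n to their inverses and cb
   commutes with (ab)^m, so every word equals a normal form (ab)^m (bc)^n a^s, and
   the alternating content of a normal form vanishes only for the empty word.
   Hence w = 1 iff every generator occurs as often at even as at odd positions of
   w, which is decided by counting over the base-3 code of w; the only unbounded
   search needed is the division by 3 that strips a letter off the code. *)

From Stdlib Require Import List Relations ZArith Lia Setoid Morphisms Bool.
Import ListNotations.

Instance word_eq_equivalence : Equivalence word_eq.
Proof.
  split.
  - intro; apply rst_refl.
  - intros ??; apply rst_sym.
  - intros ???; apply rst_trans.
Qed.

Lemma word_eq_context p q u v : word_eq u v -> word_eq (p ++ u ++ q) (p ++ v ++ q).
Proof.
  induction 1 as [u v (p0 & q0 & l & r & Hin & -> & ->)| | |].
  - apply rst_step. exists (p ++ p0), (q0 ++ q), l, r.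
    rewrite <- !app_assoc. auto.
  - reflexivity.
  - now symmetry.
  - etransitivity; eauto.
Qed.

Instance app_word_eq_proper : Proper (word_eq ==> word_eq ==> word_eq) (@app gen).
Proof.
  intros u u' Hu v v' Hv. transitivity (u' ++ v).
  - exact (word_eq_context [] v u u' Hu).
  - pose proof (word_eq_context u' [] v v' Hv) as H. now rewrite !app_nil_r in H.
Qed.

Instance cons_word_eq_proper : Proper (eq ==> word_eq ==> word_eq) (@cons gen).
Proof. intros x _ <- u v H. exact (app_word_eq_proper [x] [x] (reflexivity _) u v H). Qed.

Lemma word_eq_relator l r q : In (l, r) relators -> word_eq (l ++ q) (r ++ q).
Proof. intro Hin. apply rst_step. now exists [], q, l, r. Qed.

Lemma gen_invol x r : word_eq (x :: x :: r) r.
Proof. destruct x; apply (word_eq_relator [_; _] [] r); simpl; tauto. Qed.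

Lemma rel_bca r : word_eq (gb :: gc :: ga :: r) (ga :: gc :: gb :: r).
Proof. apply (word_eq_relator [_; _; _] [_; _; _] r); simpl; tauto. Qed.

Lemma rel_cab r : word_eq (gc :: ga :: gb :: r) (gb :: ga :: gc :: r).
Proof. apply (word_eq_relator [_; _; _] [_; _; _] r); simpl; tauto. Qed.

Lemma rel_cba r : word_eq (gc :: gb :: ga :: r) (ga :: gb :: gc :: r).
Proof. apply (word_eq_relator [_; _; _] [_; _; _] r); simpl; tauto. Qed.

Fixpoint wpow (n : nat) (P : word) : word :=
  match n with 0 => [] | S n => P ++ wpow n P end.

(* [Q] plays the role of the inverse of [P]. *)
Definition wzpow (P Q : word) (m : Z) : word :=
  if (0 <=? m)%Z then wpow (Z.to_nat m) P else wpow (Z.to_nat (- m)) Q.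

Lemma wzpow_nonneg P Q m : (0 <= m)%Z -> wzpow P Q m = wpow (Z.to_nat m) P.
Proof. intro Hm. unfold wzpow. now rewrite (proj2 (Z.leb_le 0 m) Hm). Qed.

Lemma wzpow_nonpos P Q m : (m <= 0)%Z -> wzpow P Q m = wpow (Z.to_nat (- m)) Q.
Proof.
  intro Hm. unfold wzpow. destruct (Z.leb_spec 0 m); [|reflexivity].
  now replace m with 0%Z by lia.
Qed.

Lemma wzpow_opp P Q m : wzpow P Q (- m) = wzpow Q P m.
Proof.
  destruct (Z.le_ge_cases 0 m).
  - rewrite wzpow_nonpos, wzpow_nonneg by lia. now rewrite Z.opp_involutive.
  - now rewrite wzpow_nonneg, wzpow_nonpos by lia.
Qed.

Lemma wzpow_succ P Q m : word_eq (P ++ Q) [] -> word_eq (P ++ wzpow P Q m) (wzpow P Q (m + 1)).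
Proof.
  intro HPQ. destruct (Z.le_gt_cases 0 m).
  - rewrite !wzpow_nonneg by lia. now rewrite Z2Nat.inj_add, Nat.add_1_r by lia.
  - rewrite !wzpow_nonpos by lia.
    replace (- m)%Z with (Z.succ (- (m + 1))) by lia. rewrite Z2Nat.inj_succ by lia.
    cbn [wpow]. now rewrite app_assoc, HPQ.
Qed.

Lemma wzpow_pred P Q m : word_eq (Q ++ P) [] -> word_eq (Q ++ wzpow P Q m) (wzpow P Q (m - 1)).
Proof.
  intro HQP. rewrite <- !(wzpow_opp Q P), wzpow_succ by exact HQP.
  now replace (- m + 1)%Z with (- (m - 1))%Z by lia.
Qed.

Lemma wpow_conj x P P' :
  (forall r, word_eq (x ++ P ++ r) (P' ++ x ++ r)) ->
  forall n r, word_eq (x ++ wpow n P ++ r) (wpow n P' ++ x ++ r).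
Proof.
  intros H n. induction n as [|n IH]; intro r; [reflexivity|].
  cbn [wpow]. now rewrite <- !app_assoc, H, IH.
Qed.

Lemma wzpow_conj x P Q P' Q' :
  (forall r, word_eq (x ++ P ++ r) (P' ++ x ++ r)) ->
  (forall r, word_eq (x ++ Q ++ r) (Q' ++ x ++ r)) ->
  forall m r, word_eq (x ++ wzpow P Q m ++ r) (wzpow P' Q' m ++ x ++ r).
Proof.
  intros HP HQ m r. unfold wzpow.
  destruct (0 <=? m)%Z; now apply wpow_conj.
Qed.

(** * Normal forms and the alternating content *)

Definition nf (s : bool) (m n : Z) : word :=
  wzpow [ga; gb] [gb; ga] m ++ wzpow [gb; gc] [gc; gb] n ++ (if s then [ga] else []).

Lemma ga_nf s m n : word_eq (ga :: nf s m n) (nf (negb s) (- m) (- n)).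
Proof.
  change (ga :: nf s m n) with ([ga] ++ nf s m n). unfold nf.
  rewrite (wzpow_conj [ga] [ga; gb] [gb; ga] [gb; ga] [ga; gb]).
  2: { intro r. cbn. now rewrite !gen_invol. }
  2: { reflexivity. }
  rewrite (wzpow_conj [ga] [gb; gc] [gc; gb] [gc; gb] [gb; gc]).
  2: { intro r. cbn. now rewrite rel_cba. }
  2: { intro r. cbn. now rewrite rel_bca. }
  rewrite <- (wzpow_opp [ga; gb] _ m), <- (wzpow_opp [gb; gc] _ n).
  destruct s; cbn.
  - now rewrite gen_invol.
  - reflexivity.
Qed.

Lemma nf_cons x s m n : exists s' m' n', word_eq (x :: nf s m n) (nf s' m' n').
Proof.
  assert (Hba : word_eq ([gb; ga] ++ [ga; gb]) []) by (cbn; now rewrite !gen_invol).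
  assert (Hcb : word_eq ([gc; gb] ++ [gb; gc]) []) by (cbn; now rewrite !gen_invol).
  destruct x.
  - exists (negb s), (- m)%Z, (- n)%Z. apply ga_nf.
  - exists (negb s), (- m - 1)%Z, (- n)%Z.
    rewrite <- (gen_invol ga (nf s m n)), ga_nf.
    change (gb :: ga :: ?r) with ([gb; ga] ++ r). unfold nf.
    now rewrite (app_assoc [gb; ga]), (wzpow_pred _ _ _ Hba).
  - exists (negb s), (- m - 1)%Z, (- n - 1)%Z.
    rewrite <- (gen_invol ga (nf s m n)), <- (gen_invol gb (ga :: _)), ga_nf.
    change (gc :: gb :: gb :: ga :: ?r) with ([gc; gb] ++ [gb; ga] ++ r). unfold nf.
    rewrite (app_assoc [gb; ga]), (wzpow_pred _ _ _ Hba).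
    rewrite (wzpow_conj [gc; gb] [ga; gb] [gb; ga] [ga; gb] [gb; ga]).
    2: { intro r. cbn. now rewrite rel_cba. }
    2: { intro r. cbn. now rewrite gen_invol, <- rel_cab, gen_invol. }
    now rewrite (app_assoc [gc; gb]), (wzpow_pred _ _ _ Hcb).
Qed.

Lemma word_eq_nf w : exists s m n, word_eq w (nf s m n).
Proof.
  induction w as [|x w (s & m & n & IH)].
  - now exists false, 0%Z, 0%Z.
  - destruct (nf_cons x s m n) as (s' & m' & n' & H).
    exists s', m', n'. now rewrite IH.
Qed.

Definition gen_eqb (x y : gen) : bool := gen_code x =? gen_code y.

Fixpoint alt (d : gen) (w : word) : Z :=
  match w with
  | [] => 0
  | x :: w => Z.b2z (gen_eqb x d) - alt d w
  end.

Lemma alt_app d u v :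
  alt d (u ++ v) = (alt d u + if Nat.even (length u) then alt d v else - alt d v)%Z.
Proof.
  induction u as [|x u IH]; cbn [app alt length]; [now rewrite Z.add_0_l|].
  rewrite IH, Nat.even_succ. unfold Nat.odd. destruct (Nat.even (length u)); cbn; lia.
Qed.

Lemma alt_relator d l r : In (l, r) relators ->
  alt d l = alt d r /\ Nat.even (length l) = Nat.even (length r).
Proof.
  intro Hin. repeat destruct Hin as [Hin|Hin]; try contradiction;
    injection Hin as <- <-; destruct d; split; reflexivity.
Qed.

Lemma alt_word_eq d u v : word_eq u v -> alt d u = alt d v.
Proof.
  induction 1 as [u v (p & q & l & r & Hin & -> & ->)| | |]; try congruence.
  destruct (alt_relator d l r Hin) as [Halt Hlen].
  now rewrite !alt_app, Halt, Hlen.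
Qed.

Lemma alt_wpow_app d n P r : Nat.even (length P) = true ->
  alt d (wpow n P ++ r) = (Z.of_nat n * alt d P + alt d r)%Z.
Proof.
  intro HP. induction n as [|n IH]; [reflexivity|].
  cbn [wpow]. rewrite <- app_assoc, alt_app, HP, IH. lia.
Qed.

Lemma alt_wzpow_app d m P Q r :
  Nat.even (length P) = true -> Nat.even (length Q) = true -> alt d Q = (- alt d P)%Z ->
  alt d (wzpow P Q m ++ r) = (m * alt d P + alt d r)%Z.
Proof.
  intros HP HQ HPQ. unfold wzpow. destruct (Z.leb_spec 0 m).
  - now rewrite alt_wpow_app, Z2Nat.id.
  - rewrite alt_wpow_app, Z2Nat.id, HPQ by (assumption || lia). ring.
Qed.

Lemma alt_nf d s m n :
  alt d (nf s m n) =
  (m * alt d [ga; gb] + n * alt d [gb; gc] + alt d (if s then [ga] else []))%Z.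
Proof.
  unfold nf. rewrite !alt_wzpow_app by (reflexivity || now destruct d). apply Z.add_assoc.
Qed.

Lemma nf_alt_eq0 s m n : (forall d, alt d (nf s m n) = 0%Z) -> nf s m n = [].
Proof.
  intro H. pose proof (H ga) as Ha. pose proof (H gb) as Hb. pose proof (H gc) as Hc.
  rewrite alt_nf in Ha, Hb, Hc. destruct s; cbn in Ha, Hb, Hc; [lia|].
  now replace m with 0%Z by lia; replace n with 0%Z by lia.
Qed.

Lemma word_trivial_alt w : word_trivial w <-> forall d, alt d w = 0%Z.
Proof.
  split.
  - intros Hw d. exact (alt_word_eq d w [] Hw).
  - intro Hw. destruct (word_eq_nf w) as (s & m & n & Hnf).
    unfold word_trivial. rewrite Hnf. rewrite (nf_alt_eq0 s m n); [reflexivity|].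
    intro d. rewrite <- (alt_word_eq d _ _ Hnf). apply Hw.
Qed.

Fixpoint occ (d : gen) (even : bool) (w : word) : nat :=
  match w with
  | [] => 0
  | x :: w => Nat.b2n (gen_eqb x d && even) + occ d (negb even) w
  end.

Lemma alt_occ d w : alt d w = (Z.of_nat (occ d true w) - Z.of_nat (occ d false w))%Z.
Proof.
  induction w as [|x w IH]; [reflexivity|]. cbn [alt occ negb].
  rewrite IH, andb_true_r, andb_false_r. destruct (gen_eqb x d); cbn [Z.b2z Nat.b2n]; lia.
Qed.

Definition trivialb (w : word) : bool :=
  (occ ga true w =? occ ga false w) &&
  ((occ gb true w =? occ gb false w) && (occ gc true w =? occ gc false w)).

Lemma word_trivialP w : word_trivial w <-> trivialb w = true.
Proof.
  rewrite word_trivial_alt. unfold trivialb. rewrite !andb_true_iff, !Nat.eqb_eq.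
  setoid_rewrite alt_occ. split.
  - intro H. pose proof (H ga). pose proof (H gb). pose proof (H gc). lia.
  - intros H []; lia.
Qed.

(** * A mu-recursive decision procedure *)

Lemma eval_proj0 x xs : eval (Proj 0) (x :: xs) x.
Proof. apply (ev_proj 0 (x :: xs)). cbn; lia. Qed.

Lemma eval_proj1 x y xs : eval (Proj 1) (x :: y :: xs) y.
Proof. apply (ev_proj 1 (x :: y :: xs)). cbn; lia. Qed.

Lemma eval_proj2 x y z xs : eval (Proj 2) (x :: y :: z :: xs) z.
Proof. apply (ev_proj 2 (x :: y :: z :: xs)). cbn; lia. Qed.

Lemma eval_comp1 f g xs y z : eval g xs y -> eval f [y] z -> eval (Comp f [g]) xs z.
Proof. intros. econstructor; [repeat constructor|]; eassumption. Qed.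

Lemma eval_comp2 f g1 g2 xs y1 y2 z :
  eval g1 xs y1 -> eval g2 xs y2 -> eval f [y1; y2] z -> eval (Comp f [g1; g2]) xs z.
Proof. intros. econstructor; [repeat constructor|]; eassumption. Qed.

Lemma eval_prec f g xs (F : nat -> nat) :
  eval f xs (F 0) -> (forall n, eval g (n :: F n :: xs) (F (S n))) ->
  forall n, eval (Prec f g) (n :: xs) (F n).
Proof. intros H0 HS n. induction n; econstructor; eauto. Qed.

Lemma eval_mu f xs (F : nat -> nat) n :
  (forall k, eval f (k :: xs) (F k)) -> F n = 0 -> (forall k, k < n -> F k <> 0) ->
  eval (Mu f) xs n.
Proof.
  intros Hf Hn Hlt. constructor.
  - rewrite <- Hn. apply Hf.
  - intros k Hk. exists (pred (F k)).
    rewrite Nat.succ_pred by now apply Hlt. apply Hf.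
Qed.

Definition cpred : code := Prec Zero (Proj 0).

Lemma eval_pred k : eval cpred [k] (pred k).
Proof. apply (eval_prec _ _ [] pred); [constructor | intro; apply eval_proj0]. Qed.

(* Arguments are swapped: [csub] maps [k; x] to [x - k], recursing on [k]. *)
Definition csub : code := Prec (Proj 0) (Comp cpred [Proj 1]).

Lemma eval_sub k x : eval csub [k; x] (x - k).
Proof.
  apply (eval_prec _ _ [x] (fun k => x - k)).
  - rewrite Nat.sub_0_r. apply eval_proj0.
  - intro n. rewrite Nat.sub_succ_r. eapply eval_comp1; [apply eval_proj1 | apply eval_pred].
Qed.

Definition cadd : code := Prec (Proj 0) (Comp Succ [Proj 1]).

Lemma eval_add k x : eval cadd [k; x] (k + x).
Proof.
  apply (eval_prec _ _ [x] (fun k => k + x)).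
  - apply eval_proj0.
  - intro n. eapply eval_comp1; [apply eval_proj1 | constructor].
Qed.

Definition cmul : code := Prec Zero (Comp cadd [Proj 2; Proj 1]).

Lemma eval_mul k x : eval cmul [k; x] (k * x).
Proof.
  apply (eval_prec _ _ [x] (fun k => k * x)).
  - constructor.
  - intro n. eapply eval_comp2; [apply eval_proj2 | apply eval_proj1 | apply eval_add].
Qed.

Fixpoint ccst (d : nat) : code :=
  match d with 0 => Zero | S d => Comp Succ [ccst d] end.

Lemma eval_cst d xs : eval (ccst d) xs d.
Proof.
  induction d as [|d IH]; cbn [ccst]; [constructor|].
  eapply eval_comp1; [exact IH | constructor].
Qed.

Definition ceqb (g h : code) : code :=
  Comp csub [Comp cadd [Comp csub [g; h]; Comp csub [h; g]]; ccst 1].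

Lemma eval_eqb g h xs y z :
  eval g xs y -> eval h xs z -> eval (ceqb g h) xs (Nat.b2n (y =? z)).
Proof.
  intros Hg Hh.
  replace (Nat.b2n (y =? z)) with (1 - ((z - y) + (y - z)))
    by (destruct (Nat.eqb_spec y z); cbn [Nat.b2n]; lia).
  eapply eval_comp2; [| apply eval_cst | apply eval_sub].
  eapply eval_comp2; [| | apply eval_add]; eapply eval_comp2; eauto using eval_sub.
Qed.

(* Decoding of [enc]: [enc (x :: w) = gen_code x + 3 * enc w] with [1 <= gen_code x <= 3]. *)
Definition enc_tail (m : nat) : nat := (m - 1) / 3.

Definition enc_head (m : nat) : nat := m - 3 * enc_tail m.

Lemma gen_code_bounds x : 1 <= gen_code x <= 3.
Proof. destruct x; cbn; lia. Qed.

Lemma enc_tail_cons x w : enc_tail (enc (x :: w)) = enc w.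
Proof.
  unfold enc_tail. cbn [enc]. pose proof (gen_code_bounds x).
  replace (gen_code x + 3 * enc w - 1) with ((gen_code x - 1) + enc w * 3) by lia.
  rewrite Nat.div_add, Nat.div_small by lia. reflexivity.
Qed.

Lemma enc_head_cons x w : enc_head (enc (x :: w)) = gen_code x.
Proof. unfold enc_head. rewrite enc_tail_cons. cbn [enc]. lia. Qed.

Lemma length_le_enc w : length w <= enc w.
Proof. induction w as [|x w IH]; cbn; [lia|]. pose proof (gen_code_bounds x). lia. Qed.

(* [enc_tail m] is the least [q] with [m <= 3 * (q + 1)]. *)
Definition ctail : code := Mu (Comp csub [Comp cmul [ccst 3; Comp Succ [Proj 0]]; Proj 1]).

Lemma eval_tail m : eval ctail [m] (enc_tail m).
Proof.
  apply (eval_mu _ _ (fun q => m - 3 * S q)).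
  - intro q. eapply eval_comp2; [| apply eval_proj1 | apply eval_sub].
    eapply eval_comp2; [apply eval_cst | | apply eval_mul].
    eapply eval_comp1; [apply eval_proj0 | constructor].
  - pose proof (Nat.div_mod (m - 1) 3). pose proof (Nat.mod_upper_bound (m - 1) 3).
    unfold enc_tail. lia.
  - intros q Hq. pose proof (Nat.div_mod (m - 1) 3). unfold enc_tail in Hq. lia.
Qed.

Definition chead : code := Comp csub [Comp cmul [ccst 3; ctail]; Proj 0].

Lemma eval_head m : eval chead [m] (enc_head m).
Proof.
  eapply eval_comp2; [| apply eval_proj0 | apply eval_sub].
  eapply eval_comp2; [apply eval_cst | apply eval_tail | apply eval_mul].
Qed.

Definition citer_tail : code := Prec (Proj 0) (Comp ctail [Proj 1]).

Lemma eval_iter_tail k n : eval citer_tail [k; n] (Nat.iter k enc_tail n).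
Proof.
  apply (eval_prec _ _ [n] (fun k => Nat.iter k enc_tail n)).
  - apply eval_proj0.
  - intro i. eapply eval_comp1; [apply eval_proj1 | apply eval_tail].
Qed.

Definition ceven : code := Prec (ccst 1) (Comp csub [Proj 1; ccst 1]).

Lemma eval_even k xs : eval ceven (k :: xs) (Nat.b2n (Nat.even k)).
Proof.
  apply (eval_prec _ _ xs (fun k => Nat.b2n (Nat.even k))).
  - apply eval_cst.
  - intro n. replace (Nat.b2n (Nat.even (S n))) with (1 - Nat.b2n (Nat.even n))
      by (rewrite Nat.even_succ; unfold Nat.odd; now destruct (Nat.even n)).
    eapply eval_comp2; [apply eval_proj1 | apply eval_cst | apply eval_sub].
Qed.

Fixpoint sum_lt (N : nat) (F : nat -> nat) : nat :=
  match N with 0 => 0 | S N => F N + sum_lt N F end.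

Lemma sum_lt_ext N F G : (forall k, k < N -> F k = G k) -> sum_lt N F = sum_lt N G.
Proof.
  induction N as [|N IH]; intro H; cbn; [reflexivity|].
  rewrite (H N), IH by (lia || (intros; apply H; lia)). reflexivity.
Qed.

Lemma sum_lt_succ_l N F : sum_lt (S N) F = F 0 + sum_lt N (fun k => F (S k)).
Proof. induction N as [|N IH]; [cbn; lia|]. cbn [sum_lt] in *. rewrite IH. lia. Qed.

Lemma sum_lt_zero N F : (forall k, F k = 0) -> sum_lt N F = 0.
Proof. intro H. induction N as [|N IH]; cbn; [reflexivity|]. now rewrite H, IH. Qed.

Definition occ_term (d : gen) (even : bool) (n k : nat) : nat :=
  Nat.b2n (enc_head (Nat.iter k enc_tail n) =? gen_code d) *
  Nat.b2n (Nat.b2n (Nat.even k) =? Nat.b2n even).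

Definition cocc_term (d : gen) (even : bool) : code :=
  Comp cmul [ceqb (Comp chead [citer_tail]) (ccst (gen_code d));
             ceqb ceven (ccst (Nat.b2n even))].

Lemma eval_occ_term d even k n : eval (cocc_term d even) [k; n] (occ_term d even n k).
Proof.
  eapply eval_comp2; [| | apply eval_mul]; apply eval_eqb; try apply eval_cst.
  - eapply eval_comp1; [apply eval_iter_tail | apply eval_head].
  - apply eval_even.
Qed.

Definition cocc (d : gen) (even : bool) : code :=
  Comp (Prec Zero (Comp cadd [Comp (cocc_term d even) [Proj 0; Proj 2]; Proj 1]))
       [Proj 0; Proj 0].

Lemma eval_occ_sum d even n : eval (cocc d even) [n] (sum_lt n (occ_term d even n)).
Proof.
  eapply eval_comp2; [apply eval_proj0 | apply eval_proj0 |].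
  apply (eval_prec _ _ [n] (fun N => sum_lt N (occ_term d even n))); [constructor|].
  intro N. eapply eval_comp2; [| apply eval_proj1 | apply eval_add].
  eapply eval_comp2; [apply eval_proj0 | apply eval_proj2 | apply eval_occ_term].
Qed.

Lemma occ_term_nil d even k : occ_term d even (enc []) k = 0.
Proof.
  assert (Hiter : Nat.iter k enc_tail 0 = 0)
    by (induction k as [|k IH]; [|rewrite Nat.iter_succ, IH]; reflexivity).
  unfold occ_term. change (enc []) with 0. rewrite Hiter. now destruct d.
Qed.

Lemma occ_term_cons_0 d even x w :
  occ_term d even (enc (x :: w)) 0 = Nat.b2n (gen_eqb x d && even).
Proof.
  unfold occ_term, gen_eqb. change (Nat.iter 0 enc_tail ?n) with n. rewrite enc_head_cons.
  now destruct (gen_code x =? gen_code d), even.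
Qed.

Lemma occ_term_cons_S d even x w k :
  occ_term d even (enc (x :: w)) (S k) = occ_term d (negb even) (enc w) k.
Proof.
  unfold occ_term. rewrite Nat.iter_succ_r, enc_tail_cons, Nat.even_succ. unfold Nat.odd.
  now destruct (Nat.even k), even.
Qed.

Lemma sum_occ_term d even w N : length w <= N ->
  sum_lt N (occ_term d even (enc w)) = occ d even w.
Proof.
  revert even N. induction w as [|x w IH]; intros even N HN.
  - apply sum_lt_zero, occ_term_nil.
  - destruct N as [|N]; [cbn in HN; lia|].
    rewrite sum_lt_succ_l, occ_term_cons_0. cbn [occ]. f_equal.
    rewrite <- (IH (negb even) N) by (cbn in HN; lia).
    apply sum_lt_ext. intros k _. apply occ_term_cons_S.
Qed.

Lemma eval_occ d even w : eval (cocc d even) [enc w] (occ d even w).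
Proof. rewrite <- (sum_occ_term d even w (enc w)) by apply length_le_enc. apply eval_occ_sum. Qed.

Definition cdecide : code :=
  Comp cmul [ceqb (cocc ga true) (cocc ga false);
             Comp cmul [ceqb (cocc gb true) (cocc gb false);
                        ceqb (cocc gc true) (cocc gc false)]].

Lemma eval_decide w : eval cdecide [enc w] (Nat.b2n (trivialb w)).
Proof.
  replace (Nat.b2n (trivialb w)) with
    (Nat.b2n (occ ga true w =? occ ga false w) *
     (Nat.b2n (occ gb true w =? occ gb false w) * Nat.b2n (occ gc true w =? occ gc false w)))
    by (unfold trivialb; now destruct (_ =? _), (_ =? _), (_ =? _)).
  eapply eval_comp2; [| eapply eval_comp2; [| | apply eval_mul] | apply eval_mul];
    apply eval_eqb; apply eval_occ.
Qed.

Theorem mainTheorem10 :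
  exists c : code, forall w : word,
    (word_trivial w -> eval c [enc w] 1) /\
    (~ word_trivial w -> eval c [enc w] 0).
Proof.
  exists cdecide. intro w. pose proof (eval_decide w) as H.
  rewrite word_trivialP. destruct (trivialb w); split; intro; easy.
Qed.
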